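(* A set $U\subseteq\mathcal{B}$ is avoidable if and only if $U^{*}=\{s^{*}\mid s\in U\}$ is avoidable. Furthermore, $U$ is maximal avoidable if and only if $U^{*}$ is maximal avoidable.
   Context: The bicyclic inverse semigroup is $\mathcal{B}=\{(a,b)\in\mathbb{Z}\times\mathbb{Z}\mid a\ge 0,\ a+b\ge 0\}$ with multiplication $(a,b)(c,d)=(\max\{c+d,a\}-d,\ b+d)$ and inverse $(a,b)^{*}=(a+b,-b)$. A subset $U\subseteq\mathcal{B}$ is called avoidable if $\mathcal{B}$ can be partitioned into two subsets $A$ and $B$ such that no element of $U$ can be written as a product $xy$ of two distinct elements $x\neq y$ both in $A$, or both in $B$. A maximal avoidable set is an avoidable set not properly contained in any other avoidable subset of $\mathcal{B}$. *)

From Stdlib Require Import ZArith.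
Open Scope Z_scope.

(* The bicyclic inverse semigroup B, as pairs (a,b) of integers with
   a >= 0 and a + b >= 0. *)
Definition inB (p : Z * Z) : Prop := 0 <= fst p /\ 0 <= fst p + snd p.

Definition bmul (p q : Z * Z) : Z * Z :=
  let '(a, b) := p in let '(c, d) := q in (Z.max (c + d) a - d, b + d).

Definition binv (p : Z * Z) : Z * Z := let '(a, b) := p in (a + b, - b).

Definition subB (U : Z * Z -> Prop) : Prop := forall s, U s -> inB s.

Definition star_set (U : Z * Z -> Prop) : Z * Z -> Prop :=
  fun t => exists s, U s /\ t = binv s.

(* U is avoidable: B can be partitioned into A = {x | inA x} and its
   complement B \ A such that no product xy with x <> y both in the same
   part lies in U. *)
Definition avoidable (U : Z * Z -> Prop) : Prop :=
  subB U /\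
  exists inA : Z * Z -> Prop,
    forall x y, inB x -> inB y -> x <> y -> (inA x <-> inA y) ->
      ~ U (bmul x y).

Definition maximal_avoidable (U : Z * Z -> Prop) : Prop :=
  avoidable U /\
  forall V, avoidable V -> (forall s, U s -> V s) -> forall s, V s -> U s.

(* The involution s |-> s^* maps B onto B and reverses products:
   (xy)^* = y^* x^*.  Hence a partition {A, B \ A} avoiding U is carried to
   the partition {A^*, B \ A^*}, which avoids U^*, and since ^* is an
   inclusion-preserving involution on subsets of B it also preserves
   maximality. *)
From Stdlib Require Import ZArith Lia.
Open Scope Z_scope.

Lemma binvK p : binv (binv p) = p.
Proof. destruct p as [a b]; simpl; f_equal; lia. Qed.

Lemma binv_inj x y : binv x = binv y -> x = y.
Proof. intro E. rewrite <- (binvK x), <- (binvK y), E. reflexivity. Qed.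

Lemma binv_inB p : inB p -> inB (binv p).
Proof. destruct p as [a b]; unfold inB; simpl; lia. Qed.

Lemma binvM x y : binv (bmul x y) = bmul (binv y) (binv x).
Proof. destruct x as [a b], y as [c d]; simpl; f_equal; lia. Qed.

Lemma star_setE U s : star_set U s <-> U (binv s).
Proof.
  split.
  - intros [t [Ht ->]]. now rewrite binvK.
  - intro Hs. exists (binv s). now rewrite binvK.
Qed.

Lemma star_setK U s : star_set (star_set U) s <-> U s.
Proof. rewrite 2!star_setE, binvK. reflexivity. Qed.

Lemma star_set_subl U V :
  (forall s, star_set U s -> V s) <-> (forall s, U s -> star_set V s).
Proof.
  split; intros H s Hs.
  - apply star_setE, H, star_setE. now rewrite binvK.
  - rewrite star_setE in Hs. apply H in Hs. rewrite star_setE, binvK in Hs.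
    exact Hs.
Qed.

Lemma avoidable_ext U V : (forall s, U s <-> V s) -> avoidable U -> avoidable V.
Proof.
  intros E [HU [inA HA]]. split.
  - intros s Hs. apply HU, E, Hs.
  - exists inA. intros x y Hx Hy Hxy Hpart HV.
    apply (HA x y Hx Hy Hxy Hpart), E, HV.
Qed.

Lemma avoidable_star_set U : avoidable U -> avoidable (star_set U).
Proof.
  intros [HU [inA HA]]. split.
  - intros t Ht. apply star_setE, HU, binv_inB in Ht. now rewrite binvK in Ht.
  - exists (fun x => inA (binv x)). intros x y Hx Hy Hxy Hpart Hxy_star.
    apply (HA (binv y) (binv x)); auto using binv_inB.
    + intro E. apply Hxy. symmetry. now apply binv_inj.
    + tauto.
    + rewrite <- binvM. now apply star_setE.
Qed.

Lemma avoidable_star_setE U : avoidable (star_set U) <-> avoidable U.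
Proof.
  split; [|apply avoidable_star_set].
  intro H. apply avoidable_star_set in H.
  eapply avoidable_ext; [|exact H]. apply star_setK.
Qed.

Lemma maximal_avoidable_ext U V :
  (forall s, U s <-> V s) -> maximal_avoidable U -> maximal_avoidable V.
Proof.
  intros E [HU Hmax]. split; [eapply avoidable_ext; eauto|].
  intros W HW HVW s Ws. apply E, (Hmax W HW); auto.
  intros t Ht. apply HVW, E, Ht.
Qed.

Lemma maximal_avoidable_star_set U :
  maximal_avoidable U -> maximal_avoidable (star_set U).
Proof.
  intros [HU Hmax]. split; [now apply avoidable_star_set|].
  intros V HV HUV.
  apply star_set_subl, (Hmax (star_set V)); [now apply avoidable_star_set|].
  now apply star_set_subl.
Qed.

Lemma maximal_avoidable_star_setE U :
  maximal_avoidable (star_set U) <-> maximal_avoidable U.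
Proof.
  split; [|apply maximal_avoidable_star_set].
  intro H. apply maximal_avoidable_star_set in H.
  eapply maximal_avoidable_ext; [|exact H]. apply star_setK.
Qed.

Theorem proposition4p1 :
  forall U : Z * Z -> Prop, subB U ->
    (avoidable U <-> avoidable (star_set U)) /\
    (maximal_avoidable U <-> maximal_avoidable (star_set U)).
Proof.
  intros U _. split.
  - symmetry. apply avoidable_star_setE.
  - symmetry. apply maximal_avoidable_star_setE.
Qed.
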